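(* Let $G$ be a connected graph with node set $V$, $n=|V|$, and let $r$ be a ranking of $V$. Let $f$ be a function such that $f(v,\ell)$ can be evaluated for any $v\in V$ and $\ell\le e(v)$. If $f(v,\cdot)$ is non-decreasing for all $v\in V$, i.e., $f(v,\ell)\le f(v,\ell')$ for $\ell\le\ell'$, then the minimum eccentricity selection procedure described below returns a node $u$ such that $f(u,e(u))$ is minimal over all nodes, and updates the lower certificate $L$ so that $e_L(u)=e(u)$ and $f(v,e_L(v))\ge f(u,e(u))$ for all $v\in V$. Moreover, $k$ successive computations of a node minimizing $f(u,e(u))$ with this procedure use $k+2|L'|$ one-to-all distance queries and $(k+2|L'|)n$ evaluations of $f$, where $L'\subseteq \{\mathrm{antipode}_r(v): v\in V\}$ denotes the set of nodes added to $L$.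
   Context: For nodes $u,v$, $d(u,v)$ is the shortest-path distance and $e(u)=\max_{v\in V} d(u,v)$ is the eccentricity of $u$. Given a ranking $r$ of the nodes, the antipode $\mathrm{antipode}_r(u)$ of $u$ is its furthest node of highest rank, i.e., $\mathrm{antipode}_r(u)=\arg\max_{v\in V}(d(u,v),r(v))$ with pairs compared lexicographically. A one-to-all distance query from $u$ (e.g., a BFS) returns $d(u,v)$ for all $v\in V$, from which $e(u)$ and $\mathrm{antipode}_r(u)$ are obtained. For a set $L$ of nodes (a lower certificate), $e_L(v)=\max_{x\in L} d(v,x)$ (equal to $0$ when $L=\emptyset$), so that $e_L(v)\le e(v)$. The minimum eccentricity selection procedure for $f$ maintains a set $L$ (initially empty) together with the values $e_L(v)$ for all $v\in V$, and, when called, repeats the following: pick $u=\arg\min_{v\in V} f(v,e_L(v))$; perform a one-to-all distance query from $u$ to obtain $e(u)$; if $e_L(u)=e(u)$, return $u$; otherwise let $a=\mathrm{antipode}_r(u)$, perform a one-to-all distance query from $a$, add $a$ to $L$, and update $e_L(v):=\max(e_L(v),d(a,v))$ for all $v\in V$. *)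

From mathcomp Require Import all_boot all_order.
Set Implicit Arguments. Unset Strict Implicit. Unset Printing Implicit Defensive.
Import Order.TTheory.
Open Scope order_scope.

Section MinEcc.
Variable T : finType.
Variable adj : rel T.

(* d(u,v): the least k such that there is a walk with k edges from u to v.
   (Searched among k < #|T|; in a connected graph every shortest path has
   fewer than #|T| edges.) *)
Definition dist (u v : T) : nat :=
  find (fun k => [exists p : k.-tuple T, path adj u p && (last u p == v)])
       (iota 0 #|T|).

Definition ecc (u : T) : nat := \max_(v : T) dist u v.

Definition eL (L : {set T}) (v : T) : nat := \max_(x in L) dist v x.

Variable r : T -> nat.
Definition antipode (u : T) : T :=
  [arg max_(v > u) ((dist u v, r v) : nat *l nat)].

Variable disp : Order.disp_t.
Variable R : orderType disp.
Variable f : T -> nat -> R.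

Definition is_argmin (L : {set T}) (u : T) : Prop :=
  forall v, f u (eL L u) <= f v (eL L v).

(* One call of the minimum eccentricity selection procedure, started with
   the lower certificate L.  [select_run L u L' q ev] means: the call may
   (for some tie-breaking of the argmin) return u, leaving the certificate
   L', having performed q one-to-all distance queries and ev evaluations
   of f (each argmin computation evaluates f at all #|T| nodes). *)
Inductive select_run : {set T} -> T -> {set T} -> nat -> nat -> Prop :=
| run_return L u :
    is_argmin L u -> eL L u = ecc u ->
    select_run L u L 1 #|T|
| run_step L u u' L' q ev :
    is_argmin L u -> eL L u <> ecc u ->
    select_run (antipode u |: L) u' L' q ev ->
    select_run L u' L' (q + 2) (ev + #|T|).

Inductive select_runs : nat -> {set T} -> {set T} -> nat -> nat -> Prop :=
| runs0 L : select_runs 0 L L 0 0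
| runsS k L L1 L2 u q1 ev1 q2 ev2 :
    select_run L u L1 q1 ev1 ->
    select_runs k L1 L2 q2 ev2 ->
    select_runs k.+1 L L2 (q1 + q2) (ev1 + ev2).

End MinEcc.

From mathcomp Require Import all_boot all_order zify.
Import Order.TTheory.
Open Scope order_scope.

Set Implicit Arguments.
Unset Strict Implicit.
Unset Printing Implicit Defensive.

(* Since e_L(v) <= e(v) and f(v, .) is non-decreasing, a node u minimising
   f(v, e_L(v)) with e_L(u) = e(u) also minimises f(v, e(v)).  Whenever the
   current argmin u is not certified, its antipode a realises e(u), so a is
   not yet in L; hence every non-returning iteration adds a new node to L,
   which bounds the number of iterations and accounts for the 2|L'| extra
   queries, each iteration costing one argmin, i.e. n evaluations of f. *)

Section MinEccSelection.
Variables (T : finType) (adj : rel T) (r : T -> nat).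
Variables (disp : Order.disp_t) (R : orderType disp) (f : T -> nat -> R).

Local Notation dist := (dist adj).
Local Notation ecc := (ecc adj).
Local Notation eL := (eL adj).
Local Notation antipode := (antipode adj r).
Local Notation is_argmin := (is_argmin adj f).
Local Notation select_run := (select_run adj r f).
Local Notation select_runs := (select_runs adj r f).

Definition antipodes : {set T} := [set antipode v | v in T].

Lemma leq_dist_antipode u v : (dist u v <= dist u (antipode u))%N.
Proof. by rewrite /antipode; case: arg_maxP => // a _ /(_ v isT) /andP[]. Qed.

Lemma ecc_antipode u : ecc u = dist u (antipode u).
Proof.
apply/eqP; rewrite eqn_leq leq_bigmax andbT.
by apply/bigmax_leqP => v _; apply: leq_dist_antipode.
Qed.

Lemma eL_le_ecc (L : {set T}) v : (eL L v <= ecc v)%N.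
Proof. by apply/bigmax_leqP => x _; apply: leq_bigmax. Qed.

Lemma eL_ecc_antipode (L : {set T}) u : antipode u \in L -> eL L u = ecc u.
Proof.
move=> aL; apply/eqP; rewrite eqn_leq eL_le_ecc ecc_antipode.
exact: leq_bigmax_cond.
Qed.

Lemma antipode_notin (L : {set T}) u : eL L u <> ecc u -> antipode u \notin L.
Proof. by move=> neq_eL; apply/negP => /eL_ecc_antipode. Qed.

Lemma exists_argmin (L : {set T}) : (0 < #|T|)%N -> exists u, is_argmin L u.
Proof.
case/card_gt0P=> x0 _; exists [arg min_(v < x0) f v (eL L v)].
by case: arg_minP => // u _ u_min v; apply: u_min.
Qed.

Lemma select_run_total (L : {set T}) : (0 < #|T|)%N ->
  exists u L' q ev, select_run L u L' q ev.
Proof.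
move=> T_gt0; have [n] := ubnP #|~: L|; elim: n L => // n IHn L.
rewrite ltnS => le_n; have [u u_min] := exists_argmin L T_gt0.
have [eq_eL|neq_eL] := eqVneq (eL L u) (ecc u).
  by exists u, L, 1%N, #|T|; apply: run_return.
have aL : antipode u \notin L by apply: antipode_notin; apply/eqP.
have lt_n : (#|~: (antipode u |: L)| < n)%N.
  apply: leq_trans le_n; apply/proper_card; rewrite properC.
  by apply: properUr; rewrite sub1set.
have [u' [L' [q [ev run']]]] := IHn _ lt_n.
by exists u', L', (q + 2)%N, (ev + #|T|)%N; apply: run_step u_min _ run'; apply/eqP.
Qed.

Lemma select_run_certified (L : {set T}) u L' q ev : select_run L u L' q ev ->
  is_argmin L' u /\ eL L' u = ecc u.
Proof. by elim. Qed.

Lemma select_run_cost (L : {set T}) u L' q ev : select_run L u L' q ev ->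
  (q + 2 * #|L| = 1 + 2 * #|L'|)%N /\ (ev + #|L| * #|T| = (1 + #|L'|) * #|T|)%N.
Proof.
elim=> {L u L' q ev} [//|L u u' L' q ev _ neq_eL _ [IHq IHev]].
rewrite cardsU1 antipode_notin // mulSn in IHq IHev; lia.
Qed.

Lemma select_run_antipodes (L : {set T}) u L' q ev : select_run L u L' q ev ->
  L \subset antipodes -> L' \subset antipodes.
Proof.
elim=> {L u L' q ev} // L u u' L' q ev _ _ _ IH sub_L; apply: IH.
by rewrite subUset sub1set imset_f.
Qed.

Lemma select_runs_cost k L L' q ev : select_runs k L L' q ev ->
  (q + 2 * #|L| = k + 2 * #|L'|)%N /\ (ev + #|L| * #|T| = (k + #|L'|) * #|T|)%N.
Proof.
elim=> {k L L' q ev} // k L L1 L2 u q1 ev1 q2 ev2 run1 _ [IHq IHev].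
have [q1E ev1E] := select_run_cost run1.
rewrite !mulnDl in ev1E IHev *; lia.
Qed.

Lemma select_runs_antipodes k L L' q ev : select_runs k L L' q ev ->
  L \subset antipodes -> L' \subset antipodes.
Proof.
elim=> {k L L' q ev} // k L L1 L2 u q1 ev1 q2 ev2 run1 _ IH sub_L.
exact/IH/(select_run_antipodes run1).
Qed.

Hypothesis f_mono : forall v (l l' : nat), (l <= l' <= ecc v)%N -> f v l <= f v l'.

Lemma certified_argmin_min (L : {set T}) u : is_argmin L u -> eL L u = ecc u ->
  forall v, f u (ecc u) <= f v (ecc v).
Proof.
move=> u_min eq_eL v; rewrite -eq_eL; apply: le_trans (u_min v) _.
by apply: f_mono; rewrite eL_le_ecc leqnn.
Qed.

End MinEccSelection.

Theorem proposition1 (T : finType) (adj : rel T) (r : T -> nat)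
    (disp : Order.disp_t) (R : orderType disp) (f : T -> nat -> R) :
  (* G is a (nonempty) connected simple undirected graph *)
  symmetric adj -> irreflexive adj -> (0 < #|T|)%N ->
  (forall u v : T, connect adj u v) ->
  (* r is a ranking of the nodes *)
  injective r ->
  (* f(v, .) is non-decreasing on its domain l <= e(v) *)
  (forall (v : T) (l l' : nat), (l <= l' <= ecc adj v)%N ->
      f v l <= f v l') ->
  (* the procedure terminates (returns) from any lower certificate L *)
  (forall L : {set T}, exists u L' q ev, select_run adj r f L u L' q ev) /\
  (* correctness of any run *)
  (forall (L : {set T}) (u : T) (L' : {set T}) (q ev : nat),
      select_run adj r f L u L' q ev ->
      (forall v, f u (ecc adj u) <= f v (ecc adj v)) /\
      eL adj L' u = ecc adj u /\
      (forall v, f u (ecc adj u) <= f v (eL adj L' v))) /\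
  (* cost of k successive calls starting from the empty certificate *)
  (forall (k : nat) (L' : {set T}) (q ev : nat),
      select_runs adj r f k set0 L' q ev ->
      [/\ q = (k + 2 * #|L'|)%N,
          (ev <= (k + 2 * #|L'|) * #|T|)%N &
          L' \subset [set antipode adj r v | v in T]]).
Proof.
move=> _ _ T_gt0 _ _ f_mono; split; [|split].
- by move=> L; apply: select_run_total.
- move=> L u L' q ev /select_run_certified[u_min eq_eL].
  split; first exact: certified_argmin_min u_min eq_eL.
  by split=> // v; rewrite -eq_eL.
- move=> k L' q ev runs.
  have [] := select_runs_cost runs; rewrite cards0 !muln0 !addn0 => -> ->.
  split=> //; first by rewrite leq_mul2r leq_add2l leq_pmull ?orbT.
  exact: select_runs_antipodes runs (sub0set _).
Qed.
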